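(* Let $H$ be a finite loopless graph with a marked vertex $v_0$ and $L$ a finite graph with at least $\deg_H(v_0)$ vertices. Let $G$ be obtained from $H$ by deleting $v_0$, adding a disjoint copy of $L$, and attaching each edge of $H$ formerly incident to $v_0$ to a vertex of $L$, distinct edges to distinct vertices. If every two bases of $M(H)$ intersect and every two bases of $M^\star(L)$ intersect, then every two bases of $M(G)$ intersect and every two bases of $M(G)^\star$ intersect.
   Context: $M(K)$ denotes the graphic (cycle) matroid of a graph $K$, whose bases are the edge sets of maximal spanning forests; $M^\star(K)$ is its dual. *)

From mathcomp Require Import all_boot.
Set Implicit Arguments. Unset Strict Implicit. Unset Printing Implicit Defensive.

Section Graphs.
Variables (V E : finType) (ends : E -> V * V).

Definition incident (v : V) (e : E) : bool := ((ends e).1 == v) || ((ends e).2 == v).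

Definition loopless : Prop := forall e, (ends e).1 != (ends e).2.

(* degree of v in the edge set C (a loop counts twice) *)
Definition degC (C : {set E}) (v : V) : nat :=
  #|[set e in C | (ends e).1 == v]| + #|[set e in C | (ends e).2 == v]|.

(* number of edges incident to v, i.e. deg(v) in a loopless graph *)
Definition deg (v : V) : nat := #|[set e | incident v e]|.

Definition adjC (C : {set E}) : rel E :=
  [rel e f | [&& e \in C, f \in C &
     incident (ends f).1 e || incident (ends f).2 e]].

Definition is_cycle (C : {set E}) : bool :=
  [&& C != set0,
      [forall v, (degC C v == 0) || (degC C v == 2)] &
      [forall e in C, forall f in C, connect (adjC C) e f]].

Definition forest (F : {set E}) : bool :=
  [forall C : {set E}, (C \subset F) ==> ~~ is_cycle C].

(* bases of the cycle matroid M(K): maximal (spanning) forests *)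
Definition graphic_basis (F : {set E}) : bool :=
  forest F && [forall e, (e \notin F) ==> ~~ forest (e |: F)].

(* bases of the dual matroid M*(K): complements of bases of M(K) *)
Definition cographic_basis (F : {set E}) : bool := graphic_basis (~: F).

Definition bases_intersect : Prop :=
  forall B1 B2, graphic_basis B1 -> graphic_basis B2 -> B1 :&: B2 != set0.

Definition cobases_intersect : Prop :=
  forall B1 B2, cographic_basis B1 -> cographic_basis B2 -> B1 :&: B2 != set0.

End Graphs.

(* The graph G: delete v0 from H, add a copy of L, reattach edges at v0 via f *)
Section Construction.
Variables (VH EH VL EL : finType) (endsH : EH -> VH * VH) (endsL : EL -> VL * VL)
          (v0 : VH) (f : EH -> VL).

Definition GV : finType := ({v : VH | v != v0} + VL)%type.
Definition GE : finType := (EH + EL)%type.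

Definition reattach (y : VL) (x : VH) : GV :=
  match (insub x : option {v : VH | v != v0}) with
  | Some u => inl u
  | None => inr y
  end.

Definition endsG (e : GE) : GV * GV :=
  match e with
  | inl e => (reattach (f e) (endsH e).1, reattach (f e) (endsH e).2)
  | inr e => (inr (endsL e).1, inr (endsL e).2)
  end.

End Construction.

From mathcomp Require Import all_boot.
Set Implicit Arguments. Unset Strict Implicit. Unset Printing Implicit Defensive.

(* Collapsing the copy of L back to v0 maps G onto H and sends spanning edge
   sets to spanning edge sets, so every basis of G contains, in its H-part, a
   basis of H; disjoint bases of G would yield disjoint bases of H.  Dually, the L-part of a basis of G is a forest of L; extending it to
   a basis of L and complementing, every cobasis of G contains in its L-part a
   cobasis of L, so disjoint cobases of G would yield disjoint cobases of L.
   The graph theory needed is that the bases of M(K) are exactly the spanning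
   forests: an edge closing a cycle with a forest F joins two vertices already
   connected in F (a parity count of degrees across the component of one
   endpoint), and conversely a simple path of F together with an edge joining
   its ends is a cycle. *)

Lemma card_set_in_sum (T : finType) (A : {set T}) (p : pred T) :
  #|[set x in A | p x]| = \sum_(x in A) p x.
Proof.
rewrite -sum1_card [LHS]big_mkcond [RHS]big_mkcond /=.
by apply: eq_bigr => x _; rewrite inE; case: (x \in A); case: (p x).
Qed.

Lemma sum_nat_eq_in (T : finType) (a : T) (K : {set T}) :
  \sum_(v in K) (a == v : nat) = (a \in K).
Proof.
case: (boolP (a \in K)) => aK.
  rewrite (bigD1 a) //= eqxx big1 // => v /andP[_ va].
  by rewrite eq_sym (negbTE va).
by rewrite big1 // => v vK; case: eqP => // av; rewrite av vK in aK.
Qed.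

Lemma connect_map (T T' : finType) (r : rel T) (r' : rel T') (h : T -> T') :
  (forall x y, r x y -> connect r' (h x) (h y)) ->
  forall x y, connect r x y -> connect r' (h x) (h y).
Proof.
move=> hr x y /connectP[p pth ->] {y}.
elim: p x pth => [|z p IHp] x /=; first by move=> _; apply: connect0.
by case/andP => /hr rxz /IHp; apply: connect_trans.
Qed.

Section CycleMatroid.
Variables (V E : finType) (ends : E -> V * V).

Definition end_mult (e : E) (v : V) : nat := ((ends e).1 == v) + ((ends e).2 == v).

Definition edge_rel (F : {set E}) : rel V := fun u v =>
  [exists g in F, ((ends g).1 == u) && ((ends g).2 == v)
               || ((ends g).1 == v) && ((ends g).2 == u)].

Definition spanning (F : {set E}) : Prop :=
  forall e, connect (edge_rel F) (ends e).1 (ends e).2.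

Lemma degCE (C : {set E}) v : degC ends C v = \sum_(e in C) end_mult e v.
Proof. by rewrite /degC !card_set_in_sum -big_split. Qed.

Lemma degC1 g v : degC ends [set g] v = end_mult g v.
Proof. by rewrite degCE big_set1. Qed.

Lemma degCU1 g (C : {set E}) v :
  g \notin C -> degC ends (g |: C) v = end_mult g v + degC ends C v.
Proof. by move=> gC; rewrite !degCE big_setU1. Qed.

Lemma degCD1 g (C : {set E}) v :
  g \in C -> degC ends C v = end_mult g v + degC ends (C :\ g) v.
Proof.
by move=> gC; rewrite -degCU1 ?setD11 ?setD1K.
Qed.

Lemma end_mult_le_degC g (C : {set E}) v : g \in C -> end_mult g v <= degC ends C v.
Proof. by move=> gC; rewrite (degCD1 v gC) leq_addr. Qed.

Lemma degC_gt0_incident (C : {set E}) v :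
  0 < degC ends C v -> exists2 g, g \in C & incident ends v g.
Proof.
rewrite degCE => Cv; apply/exists_inP; apply: contraLR Cv.
rewrite negb_exists_in -leqNgt leqn0 sum_nat_eq0 => /forall_inP noinc.
apply/forall_inP => g /noinc; rewrite /incident negb_or /end_mult.
by case/andP => /negbTE -> /negbTE ->.
Qed.

Lemma adjC_sym (C : {set E}) : symmetric (adjC ends C).
Proof.
move=> e f; rewrite /adjC /incident /=.
case: (e \in C); case: (f \in C) => //=.
by rewrite !(eq_sym (ends f).1) !(eq_sym (ends f).2); do 4 case: eqP.
Qed.

Lemma adjC_common_end (C : {set E}) a b v :
  a \in C -> b \in C -> 0 < end_mult a v -> 0 < end_mult b v -> adjC ends C a b.
Proof.
rewrite /end_mult /adjC /incident /= => -> -> /=.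
by do 4 (case: eqP => [->|]) => //=; rewrite ?eqxx ?orbT.
Qed.

Lemma connect_adjCU1 g (C : {set E}) v :
  degC ends C v = 1 -> 0 < end_mult g v ->
  {in C &, forall a b, connect (adjC ends C) a b} ->
  {in g |: C &, forall a b, connect (adjC ends (g |: C)) a b}.
Proof.
move=> Cv1 gv Cconn.
have [h hC hv] : exists2 h, h \in C & incident ends v h.
  by apply: degC_gt0_incident; rewrite Cv1.
have hg : adjC ends (g |: C) h g.
  apply: (adjC_common_end (v := v)); rewrite ?setU11 ?setU1r //.
  by move: hv; rewrite /incident /end_mult; case/orP => ->; rewrite ?addn1.
have toG a : a \in g |: C -> connect (adjC ends (g |: C)) a g.
  case/setU1P => [->|aC]; first exact: connect0.
  apply: connect_trans (connect1 hg).
  apply: connect_sub (Cconn _ _ aC hC) => x y xy; apply: connect1.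
  by move: xy; rewrite /adjC /= => /and3P[xC yC ->]; rewrite !setU1r.
move=> a b aC bC; apply: connect_trans (toG a aC) _.
by rewrite (sym_connect_sym (@adjC_sym _)); apply: toG.
Qed.

Lemma is_cycle_intro (C : {set E}) : C != set0 ->
  (forall v, degC ends C v = 0 \/ degC ends C v = 2) ->
  {in C &, forall a b, connect (adjC ends C) a b} -> is_cycle ends C.
Proof.
move=> C0 Cdeg Cconn; rewrite /is_cycle C0 /=; apply/andP; split.
  by apply/forallP => v; case: (Cdeg v) => ->.
by apply/forall_inP => a aC; apply/forall_inP => b bC; apply: Cconn.
Qed.

Lemma cycle_sub_not_forest (C F : {set E}) :
  C \subset F -> is_cycle ends C -> ~~ forest ends F.
Proof. by move=> CF cC; apply/forallP => /(_ C); rewrite CF cC. Qed.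

Lemma forest0 : forest ends set0.
Proof.
apply/forallP => C; apply/implyP; rewrite subset0 => /eqP ->.
by rewrite /is_cycle eqxx.
Qed.

Lemma forest_extend_max (S F : {set E}) : forest ends F -> F \subset S ->
  exists F' : {set E}, [/\ F \subset F', F' \subset S, forest ends F' &
    forall e, e \in S -> e \notin F' -> ~~ forest ends (e |: F')].
Proof.
move: {2}#|S :\: F| (leqnn #|S :\: F|) => n; elim: n F => [|n IHn] F.
  rewrite leqn0 cards_eq0 => /eqP SF0 fF FS; exists F; split => // e eS eF.
  by move/setP: SF0 => /(_ e); rewrite !inE eS eF.
move=> SFn fF FS.
case: (pickP [pred e | [&& e \in S, e \notin F & forest ends (e |: F)]]);
  last first.
  by move=> maxF; exists F; split => // e eS eF; have := maxF e; rewrite /= eS eF /= => ->.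
move=> e /and3P[eS eF feF].
have SeFn : #|S :\: (e |: F)| <= n.
  rewrite -ltnS; apply: leq_trans SFn; apply: proper_card; rewrite properEneq.
  rewrite setDS ?subsetUr // andbT; apply/eqP => /setP /(_ e).
  by rewrite !inE eS eF eqxx.
have eFS : e |: F \subset S by rewrite subUset sub1set eS FS.
have [F' [eFF' F'S fF' maxF']] := IHn _ SeFn feF eFS.
by exists F'; split => //; apply: subset_trans eFF'; apply: subsetUr.
Qed.

Lemma edge_rel_sym (F : {set E}) : symmetric (edge_rel F).
Proof.
by move=> u v; apply/exists_inP/exists_inP => -[g gF uv]; exists g; rewrite // orbC.
Qed.

Lemma edge_rel_ends (F : {set E}) g : g \in F -> edge_rel F (ends g).1 (ends g).2.
Proof. by move=> gF; apply/exists_inP; exists g; rewrite ?eqxx. Qed.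

Lemma edge_relP (F : {set E}) u w : edge_rel F u w ->
  exists2 g, g \in F & forall v, end_mult g v = (u == v) + (w == v).
Proof.
case/exists_inP => g gF /orP[] /andP[/eqP g1 /eqP g2];
  by exists g => // v; rewrite /end_mult g1 g2 // addnC.
Qed.

Lemma connect_edge_rel_sub (S F : {set E}) :
  (forall g, g \in S -> connect (edge_rel F) (ends g).1 (ends g).2) ->
  subrel (connect (edge_rel S)) (connect (edge_rel F)).
Proof.
move=> SF; apply: connect_sub => x y /exists_inP[g gS /orP[]] /andP[/eqP <- /eqP <-].
  exact: SF.
by rewrite (sym_connect_sym (@edge_rel_sym F)); apply: SF.
Qed.

(* Summing the degrees in X = C :\ e over the component K of u counts every
   edge of X with both or neither endpoint in K, hence is even; but if the
   other end w of e were outside K, exactly one vertex of K (namely u) would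
   have odd degree in X. *)
Lemma not_forest_connect (F : {set E}) e : forest ends F -> ~~ forest ends (e |: F) ->
  connect (edge_rel F) (ends e).1 (ends e).2.
Proof.
move=> fF; rewrite /forest negb_forall => /existsP[C]; rewrite negb_imply negbK.
case/andP => CeF cC.
have eC : e \in C.
  apply: contraT => eC; apply: contraTT fF => _; apply: cycle_sub_not_forest cC.
  apply/subsetP => x xC; move/subsetP/(_ x xC): CeF; rewrite in_setU1.
  by case: eqP => [xe|//]; rewrite -xe xC in eC.
set u := (ends e).1; set w := (ends e).2.
have [<-|uw] := eqVneq u w; first exact: connect0.
apply: contraT => uNw.
set K := [set v | connect (edge_rel F) u v]; set X := C :\ e.
have XF : X \subset F.
  apply/subsetP => x; rewrite in_setD1 => /andP[xe xC].
  by move/subsetP/(_ x xC): CeF; rewrite in_setU1 (negbTE xe).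
have cycC v : (degC ends C v == 0) || (degC ends C v == 2).
  by case/and3P: cC => _ /forallP.
have Xclosed g : g \in X -> ((ends g).1 \in K) = ((ends g).2 \in K).
  move=> gX; have g12 := connect1 (edge_rel_ends (subsetP XF _ gX)).
  rewrite !inE; apply/idP/idP => ug; apply: connect_trans ug _ => //.
  by rewrite (sym_connect_sym (@edge_rel_sym F)).
have sumK_even : ~~ odd (\sum_(v in K) degC ends X v).
  rewrite (eq_bigr _ (fun v _ => degCE X v)) exchange_big /=.
  apply: (big_ind (fun n => ~~ odd n)) => // [m n|g gX].
    by rewrite oddD => /negbTE -> /negbTE ->.
  by rewrite big_split /= !sum_nat_eq_in Xclosed // oddD addbb.
have Xu : degC ends X u = 1.
  have := degCD1 u eC; rewrite /end_mult -/u -/w eqxx (eq_sym w) (negbTE uw).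
  by case/orP: (cycC u) => /eqP -> // [].
have sumK_u_even : ~~ odd (\sum_(v in K | v != u) degC ends X v).
  apply: (big_ind (fun n => ~~ odd n)) => // [m n|v /andP[vK vu]].
    by rewrite oddD => /negbTE -> /negbTE ->.
  have vw : v != w by apply: contraNneq uNw => <-; rewrite inE in vK.
  have := degCD1 v eC; rewrite /end_mult -/u -/w !(eq_sym _ v) (negbTE vu) (negbTE vw) -/X add0n.
  by case/orP: (cycC v) => /eqP -> <-.
have uK : u \in K by rewrite inE connect0.
by move: sumK_even; rewrite (bigD1 u) //= oddD Xu (negbTE sumK_u_even).
Qed.

Lemma simple_path_edges (F : {set E}) p : forall x u,
  path (edge_rel F) u (x :: p) -> uniq (u :: x :: p) ->
  exists P : {set E}, [/\ P \subset F, degC ends P u = 1 /\ degC ends P (last x p) = 1,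
     forall v, v != u -> v != last x p -> (degC ends P v == 0) || (degC ends P v == 2),
     forall v, v \notin u :: x :: p -> degC ends P v = 0 &
     {in P &, forall a b, connect (adjC ends P) a b}].
Proof.
elim: p => [|y p IHp] x u.
  rewrite /= andbT inE andbT => /edge_relP[g gF gE] ux.
  exists [set g]; rewrite sub1set !degC1 !gE !eqxx (eq_sym x) (negbTE ux); split=> //.
  - by move=> v vu vx; rewrite degC1 gE !(eq_sym _ v) (negbTE vu) (negbTE vx).
  - move=> v; rewrite !inE negb_or => /andP[vu vx].
    by rewrite degC1 gE !(eq_sym _ v) (negbTE vu) (negbTE vx).
  - by move=> a b; rewrite !inE => /eqP -> /eqP ->; apply: connect0.
rewrite [path _ _ _]/= => /andP[/edge_relP[g gF gE] pth] /andP[uN un].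
have [P [PF [Px Pw] Pmid Pout Pconn]] := IHp y x pth un.
move: uN; rewrite inE negb_or => /andP[ux uN].
have Pu : degC ends P u = 0 by apply: Pout; rewrite inE negb_or ux.
have gP : g \notin P.
  by apply/negP => /(end_mult_le_degC u); rewrite Pu gE eqxx.
set w := last y p.
move: un => /= /andP[xN _].
have wu : w != u by apply: contraNneq uN => <-; apply: mem_last.
have wx : w != x by apply: contraNneq xN => <-; apply: mem_last.
have gPE v : degC ends (g |: P) v = (u == v) + (x == v) + degC ends P v.
  by rewrite degCU1 // gE.
exists (g |: P); split.
- by rewrite subUset sub1set gF PF.
- by rewrite !gPE Pu Pw eqxx !(eq_sym _ w) (eq_sym x) (negbTE ux) (negbTE wu) (negbTE wx).
- move=> v vu vw; rewrite gPE (eq_sym u) (negbTE vu).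
  have [<-|xv] := eqVneq x v; first by rewrite Px.
  by rewrite add0n; apply: Pmid; rewrite // eq_sym.
- move=> v; rewrite !inE !negb_or => /and3P[vu vx vp].
  rewrite gPE !(eq_sym _ v) (negbTE vu) (negbTE vx); apply: Pout.
  by rewrite !inE !negb_or vx.
- by apply: connect_adjCU1 Px _ Pconn; rewrite gE eqxx addn1.
Qed.

(* A shortest path of F from one end of e to the other is simple, and closes
   with e into a cycle of e |: F; a loop e is a cycle on its own. *)
Lemma connect_not_forest (F : {set E}) e : e \notin F ->
  connect (edge_rel F) (ends e).1 (ends e).2 -> ~~ forest ends (e |: F).
Proof.
move=> eF; set u := (ends e).1; set w := (ends e).2.
have [uw|uw] := eqVneq u w => uCw.
  apply: (@cycle_sub_not_forest [set e]); first by rewrite sub1set setU11.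
  apply: is_cycle_intro.
  - by apply/set0Pn; exists e; rewrite inE.
  - by move=> v; rewrite degC1 /end_mult -/u -/w uw; case: (w == v); [right|left].
  - by move=> a b; rewrite !inE => /eqP -> /eqP ->; apply: connect0.
case/connectP: uCw => p0 /shortenP[[|x p] pth un _] /= wE; first by rewrite wE eqxx in uw.
have [P [PF [Pu Pw] Pmid _ Pconn]] := simple_path_edges pth un.
have eP : e \notin P by apply: contraNN eF; apply/subsetP.
apply: (@cycle_sub_not_forest (e |: P)); first exact: setUS.
have ePE v : degC ends (e |: P) v = (u == v) + (last x p == v) + degC ends P v.
  by rewrite degCU1 // /end_mult -/u -/w wE.
apply: is_cycle_intro.
- by apply/set0Pn; exists e; rewrite setU11.
- move=> v; rewrite ePE.
  have [<-|uv] := eqVneq u v; first by right; rewrite Pu -wE eq_sym (negbTE uw).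
  have [<-|wv] := eqVneq (last x p) v; first by right; rewrite Pw.
  have Pv : (degC ends P v == 0) || (degC ends P v == 2) by apply: Pmid; rewrite eq_sym.
  by case/orP: Pv => /eqP ->; [left|right].
- by apply: connect_adjCU1 Pu _ Pconn; rewrite /end_mult eqxx.
Qed.

Lemma graphic_basisP (B : {set E}) :
  graphic_basis ends B <-> forest ends B /\ spanning B.
Proof.
split.
- case/andP => fB /forallP maxB; split => // e.
  have [eB|eB] := boolP (e \in B); first exact/connect1/edge_rel_ends.
  by apply: not_forest_connect => //; apply: (implyP (maxB e)).
- case=> fB spB; rewrite /graphic_basis fB; apply/forallP => e; apply/implyP => eB.
  exact: connect_not_forest.
Qed.

Lemma spanning_sub_basis (S : {set E}) :
  spanning S -> exists2 B : {set E}, B \subset S & graphic_basis ends B.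
Proof.
move=> spS; have [B [_ BS fB maxB]] := forest_extend_max forest0 (sub0set S).
exists B => //; apply/graphic_basisP; split => // e.
apply: connect_edge_rel_sub (spS e) => g gS.
have [gB|gB] := boolP (g \in B); first exact/connect1/edge_rel_ends.
by apply: not_forest_connect => //; apply: maxB.
Qed.

Lemma forest_sub_basis (F : {set E}) :
  forest ends F -> exists2 B : {set E}, F \subset B & graphic_basis ends B.
Proof.
move=> fF; have [B [FB _ fB maxB]] := forest_extend_max fF (subsetT F).
exists B; rewrite // /graphic_basis fB; apply/forallP => e; apply/implyP.
exact: maxB.
Qed.

End CycleMatroid.

Lemma is_cycle_imset (V E V' E' : finType) (ends : E -> V * V) (ends' : E' -> V' * V')
    (hv : V -> V') (he : E -> E') :
  injective hv -> injective he ->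
  (forall e, ends' (he e) = (hv (ends e).1, hv (ends e).2)) ->
  forall C, is_cycle ends C -> is_cycle ends' (he @: C).
Proof.
move=> hv_inj he_inj hends C /and3P[C0 /forallP Cdeg /forall_inP Cconn].
have degE v' : degC ends' (he @: C) v' =
    \sum_(e in C) (((hv (ends e).1 == v') : nat) + (hv (ends e).2 == v')).
  rewrite degCE big_imset /=; last by move=> x y _ _; apply: he_inj.
  by apply: eq_bigr => e _; rewrite /end_mult hends.
apply/and3P; split.
- by case/set0Pn: C0 => x xC; apply/set0Pn; exists (he x); apply: imset_f.
- apply/forallP => v'; rewrite degE.
  case: (pickP (fun v => hv v == v')) => [v /eqP <-|notim].
    have := Cdeg v; rewrite degCE; congr (_ || _); congr (_ == _);
      by apply: eq_bigr => e _; rewrite /end_mult !(inj_eq hv_inj).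
  by rewrite big1 ?eqxx // => e _; rewrite !notim.
- apply/forall_inP => _ /imsetP[a aC ->]; apply/forall_inP => _ /imsetP[b bC ->].
  apply: (@connect_map _ _ (adjC ends C)); last first.
    by have /forall_inP := Cconn a aC; apply.
  move=> x y; rewrite /adjC /incident /= => /and3P[xC yC xy]; apply: connect1.
  by rewrite /= !imset_f // !hends /= !(inj_eq hv_inj).
Qed.

Section Replacement.
Variables (VH EH VL EL : finType) (endsH : EH -> VH * VH) (endsL : EL -> VL * VL).
Variables (v0 : VH) (f : EH -> VL).

Local Notation endsG := (endsG endsH endsL v0 f).

Definition collapse (x : GV VL v0) : VH := if x is inl u then val u else v0.

Lemma collapse_reattach y x : collapse (reattach v0 y x) = x.
Proof. by rewrite /reattach; case: insubP => [u _ <-|/negPn/eqP ->]. Qed.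

Lemma spanning_endsG_inl (B : {set GE EH EL}) :
  spanning endsG B -> spanning endsH [set e | inl e \in B].
Proof.
move=> spB e; have := spB (inl e).
rewrite /= -{2}(collapse_reattach (f e) (endsH e).1) -{2}(collapse_reattach (f e) (endsH e).2).
apply: connect_map => x y /exists_inP[[g|g] gB /orP[]] /andP[/eqP <- /eqP <-] //=;
  rewrite ?collapse_reattach; try exact: connect0.
  by apply/connect1/edge_rel_ends; rewrite inE.
by rewrite (sym_connect_sym (@edge_rel_sym _ _ _ _)); apply/connect1/edge_rel_ends; rewrite inE.
Qed.

Lemma forest_endsG_inr (F : {set GE EH EL}) :
  forest endsG F -> forest endsL [set e | inr e \in F].
Proof.
move=> fF; apply/forallP => C; apply/implyP => CF; apply/negP => cC.
have cG := is_cycle_imset (ends' := endsG) inr_inj inr_inj (fun=> erefl) cC.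
apply/negP: fF; apply: cycle_sub_not_forest cG.
by apply/subsetP => _ /imsetP[e eC ->]; have := subsetP CF _ eC; rewrite inE.
Qed.

Lemma bases_intersect_endsG : bases_intersect endsH -> bases_intersect endsG.
Proof.
move=> bH B1 B2 bB1 bB2.
have Hpart B : graphic_basis endsG B ->
    exists2 F : {set EH}, F \subset [set e | inl e \in B] & graphic_basis endsH F.
  by case/graphic_basisP => _ /spanning_endsG_inl/spanning_sub_basis.
have [F1 F1B1 bF1] := Hpart _ bB1; have [F2 F2B2 bF2] := Hpart _ bB2.
case/set0Pn: (bH _ _ bF1 bF2) => e /setIP[/(subsetP F1B1) e1 /(subsetP F2B2) e2].
by move: e1 e2; rewrite !inE => e1 e2; apply/set0Pn; exists (inl e); apply/setIP.
Qed.

Lemma cobases_intersect_endsG : cobases_intersect endsL -> cobases_intersect endsG.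
Proof.
move=> cL C1 C2 cC1 cC2.
have Lpart C : cographic_basis endsG C ->
    exists2 B : {set EL}, [set e | inr e \in ~: C] \subset B & cographic_basis endsL (~: B).
  case/andP => /forest_endsG_inr/forest_sub_basis[B DB bB] _.
  by exists B; rewrite // /cographic_basis setCK.
have [B1 D1 cB1] := Lpart _ cC1; have [B2 D2 cB2] := Lpart _ cC2.
case/set0Pn: (cL _ _ cB1 cB2) => e; rewrite !inE => /andP[e1 e2].
have inC (C : {set GE EH EL}) (B : {set EL}) : [set e | inr e \in ~: C] \subset B -> e \notin B -> inr e \in C.
  by move=> DB; apply: contraNT => eC; apply: (subsetP DB); rewrite !inE.
by apply/set0Pn; exists (inr e); rewrite inE (inC _ _ D1 e1) (inC _ _ D2 e2).
Qed.

End Replacement.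

(* The first three hypotheses only make G the graph of the paper; the
   conclusion holds without them. *)
Theorem proposition6p4 (VH EH VL EL : finType)
  (endsH : EH -> VH * VH) (endsL : EL -> VL * VL) (v0 : VH) (f : EH -> VL) :
  loopless endsH ->
  deg endsH v0 <= #|VL| ->
  {in [pred e | incident endsH v0 e] &, injective f} ->
  bases_intersect endsH ->
  cobases_intersect endsL ->
  bases_intersect (endsG endsH endsL v0 f) /\
  cobases_intersect (endsG endsH endsL v0 f).
Proof.
move=> _ _ _ bH cL.
by split; [apply: bases_intersect_endsG | apply: cobases_intersect_endsG].
Qed.
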